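(* Let $q\ge2$ be an integer and $\eta\in(0,1-1/q]$. Suppose $\mathcal{C}\subseteq[q]^n$ is a code such that for every $c\in\mathcal{C}$ there are at most $A$ codewords $c'\in\mathcal{C}$ (including $c$ itself) with $\delta(c,c')<\eta$. Then for every integer $L\ge2$, $\mathcal{C}$ is $(J_q(\eta-\eta/L),\,AL-1)$-list decodable.
   Context: $[q]=\{0,1,\dots,q-1\}$. For $x,y\in[q]^n$, $\delta(x,y)$ is the fraction of coordinates $i$ with $x_i\ne y_i$. A code $\mathcal{C}\subseteq[q]^n$ is $(\rho,\ell)$-list decodable if for every $y\in[q]^n$ the number of $c\in\mathcal{C}$ with $\delta(c,y)<\rho$ is at most $\ell$. The Johnson radius function is $J_q(x)=\frac{q-1}{q}\Big(1-\sqrt{1-\frac{qx}{q-1}}\Big)$ for $x\in[0,1-1/q]$. *)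

From HB Require Import structures.
From mathcomp Require Import all_boot all_order all_algebra.
From mathcomp Require Import reals.
Unset Printing Implicit Defensive.
Import Order.TTheory GRing.Theory Num.Theory.
Local Open Scope ring_scope.

Definition word (q n : nat) := {ffun 'I_n -> 'I_q}.

Definition delta (R : realType) {q n : nat} (x y : word q n) : R :=
  #|[set i : 'I_n | x i != y i]|%:R / n%:R.

Definition list_decodable (R : realType) {q n : nat} (C : {set word q n})
    (rho : R) (l : nat) : Prop :=
  forall y : word q n, (#|[set c in C | (delta R c y < rho)%R]| <= l)%N.

Definition Jq (R : realType) (q : nat) (x : R) : R :=
  (q%:R - 1) / q%:R * (1 - Num.sqrt (1 - q%:R * x / (q%:R - 1))).
Arguments delta R {q n} x y.
Arguments list_decodable R {q n} C rho l.
Arguments Jq R q x.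

From HB Require Import structures.
From mathcomp Require Import all_boot all_order all_algebra.
From mathcomp Require Import reals.
From mathcomp Require Import ring lra zify.
Import Order.TTheory GRing.Theory Num.Theory.
Local Open Scope ring_scope.

(* Fix a centre y and let X be the codewords at relative distance less than
   J_q(eta - eta/L) from y.  A maximal subset S of X whose points are pairwise
   at distance at least eta covers X by open eta-balls around its points, each
   holding at most A codewords, so |X| <= A |S|.  The Johnson bound gives
   |S| < L: counting disagreements coordinatewise and using Cauchy-Schwarz, m
   points pairwise eta-apart whose mean distance r to y is below J_q(x) satisfy
   (q-1)(eta - eta/m) <= 2(q-1)r - q r^2 < 2(q-1)J_q(x) - q J_q(x)^2 = (q-1)x,
   which for x = eta - eta/L forces m < L. *)

Lemma sqr_sum_le_card_sum_sqr {R : realFieldType} {I : finType} (A : pred I)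
    (z : I -> R) :
  (\sum_(i in A) z i) ^+ 2 <= #|A|%:R * \sum_(i in A) z i ^+ 2.
Proof.
set s := \sum_(i in A) z i; set Q := \sum_(i in A) z i ^+ 2.
have row_sum i :
    \sum_(j in A) (z i - z j) ^+ 2 = z i ^+ 2 *+ #|A| - 2 * z i * s + Q.
  have expand j : (z i - z j) ^+ 2 = z i ^+ 2 - 2 * z i * z j + z j ^+ 2 by ring.
  under eq_bigr => j _ do rewrite expand.
  by rewrite big_split /= sumrB sumr_const -mulr_sumr.
have sum_sqr_diff : \sum_(i in A) \sum_(j in A) (z i - z j) ^+ 2 =
    2 * (#|A|%:R * Q) - 2 * s ^+ 2.
  under eq_bigr => i _ do rewrite row_sum.
  rewrite big_split /= sumrB sumr_const sumrMnl -mulr_suml -mulr_sumr -/s -/Q.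
  by rewrite -[Q *+ _]mulr_natl; ring.
have : 0 <= \sum_(i in A) \sum_(j in A) (z i - z j) ^+ 2.
  by do 2!apply: sumr_ge0 => ? _; exact: sqr_ge0.
rewrite sum_sqr_diff; lra.
Qed.

Lemma sum_eq_indicator {R : pzSemiRingType} {T : finType} (c : T) (F : T -> R) :
  \sum_a (c == a)%:R * F a = F c.
Proof.
rewrite (bigD1 c) //= eqxx mul1r big1 ?addr0 // => a.
by rewrite eq_sym => /negbTE->; rewrite mul0r.
Qed.

Lemma natr_neq {R : pzRingType} {T : eqType} (a b : T) :
  (a != b)%:R = 1 - (a == b)%:R :> R.
Proof. by case: eqP => _; rewrite ?subrr ?subr0. Qed.

Lemma sum_offdiag_ge {R : numDomainType} {T : finType} (S : {set T})
    (F : T -> T -> R) (c : R) :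
  {in S, forall x, 0 <= F x x} -> {in S &, forall x x', x != x' -> c <= F x x'} ->
  #|S|%:R * (#|S|%:R - 1) * c <= \sum_(x in S) \sum_(x' in S) F x x'.
Proof.
move=> diag_ge0 offdiag_ge.
rewrite -mulrA mulr_natl -sumr_const; apply: ler_sum => x xS.
rewrite (big_setD1 x xS) /=; apply: ler_wpDl; first exact: diag_ge0.
have -> : (#|S|%:R - 1 : R) = #|S :\ x|%:R by rewrite (cardsD1 x S) xS add1n -natr1 addrK.
rewrite mulr_natl -sumr_const; apply: ler_sum => x' /setD1P[neq_x'x x'S].
by apply: offdiag_ge; rewrite // eq_sym.
Qed.

Section Nets.
Context {T : finType} (near : rel T).

Definition separated (S : {set T}) :=
  {in S &, forall s s', s != s' -> ~~ near s s'}.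

Lemma exists_separated_cover (X : {set T}) :
  reflexive near -> symmetric near ->
  exists S : {set T}, [/\ S \subset X, separated S &
    {in X, forall x, exists2 s, s \in S & near s x}].
Proof.
move=> near_refl near_sym.
pose sepb (S : {set T}) := [forall s in S, forall s' in S, (s != s') ==> ~~ near s s'].
have sepP S : reflect (separated S) (sepb S).
  apply: (iffP forall_inP) => [sep s s' sS s'S | sep s sS].
    by move/(_ s sS)/forall_inP/(_ s' s'S)/implyP: sep.
  by apply/forall_inP => s' s'S; apply/implyP; exact: sep.
pose P (S : {set T}) := (S \subset X) && sepb S.
have [S /maxsetP[/andP[SX /sepP sepS] S_max]] : {S | maxset P S}.
  by apply: ex_maxset; exists set0; rewrite /P sub0set; apply/sepP => s; rewrite inE.
exists S; split => // x xX.
case: (boolP [exists s in S, near s x]) => [/exists_inP[s] | far]; first by exists s.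
have xS : x \in S.
  have PxS : P (x |: S).
    rewrite /P subUset sub1set xX SX; apply/sepP.
    move=> s s' /setU1P[-> | sS] /setU1P[-> | s'S] neq_ss'.
    - by rewrite eqxx in neq_ss'.
    - by rewrite near_sym; apply: contraNN far => ?; apply/exists_inP; exists s'.
    - by apply: contraNN far => ?; apply/exists_inP; exists s.
    - exact: sepS.
  by rewrite -(S_max _ PxS (subsetUr _ _)) setU11.
by exists x; last exact: near_refl.
Qed.

Lemma card_le_cover (X S : {set T}) (A : nat) :
  {in X, forall x, exists2 s, s \in S & near s x} ->
  {in S, forall s, #|[set x in X | near s x]| <= A}%N ->
  (#|X| <= #|S| * A)%N.
Proof.
move=> cover ball_le.
rewrite -sum1_card -sum_nat_const.
apply: (@leq_trans (\sum_(x in X) \sum_(s in S) near s x)).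
  by apply: leq_sum => x /cover[s sS near_sx]; rewrite (bigD1 s) //= near_sx.
rewrite exchange_big /=; apply: leq_sum => s /ball_le; apply: leq_trans.
rewrite -sum1_card big_mkcond [leqRHS]big_mkcond /=; apply: leq_sum => x _.
by rewrite inE; case: (x \in X); case: near.
Qed.

End Nets.

Section Disagreements.
Context {R : realFieldType} {q : nat}.
Hypothesis q_gt1 : (1 < q)%N.

Lemma disagreeing_pairs_le {I : finType} (T : {set I}) (f : I -> 'I_q) (b : 'I_q) :
  (q%:R - 1 : R) * \sum_(x in T) \sum_(x' in T) (f x != f x')%:R <=
  2 * (q%:R - 1) * #|T|%:R * \sum_(x in T) (f x != b)%:R
    - q%:R * (\sum_(x in T) (f x != b)%:R) ^+ 2.
Proof.
set m : R := #|T|%:R.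
pose N a := \sum_(x in T) (f x == a)%:R : R.
have sum_N : \sum_a N a = m.
  rewrite exchange_big /= [LHS](eq_bigr (fun _ => 1)) ?sumr_const // => x _.
  rewrite -[RHS](sum_eq_indicator (f x) (fun _ => 1)).
  by apply: eq_bigr => a _; rewrite mulr1.
have far_b : \sum_(x in T) (f x != b)%:R = m - N b.
  by under eq_bigr do rewrite natr_neq; rewrite sumrB sumr_const.
have sum_N2 : \sum_a N a ^+ 2 = \sum_(x in T) \sum_(x' in T) (f x == f x')%:R.
  rewrite (eq_bigr (fun a => \sum_(x in T) \sum_(x' in T)
                     (f x == a)%:R * (f x' == a)%:R)); last first.
    by move=> a _; rewrite expr2 mulr_suml; apply: eq_bigr => x _; rewrite mulr_sumr.
  rewrite exchange_big /=; apply: eq_bigr => x _.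
  rewrite exchange_big /=; apply: eq_bigr => x' _.
  by rewrite sum_eq_indicator eq_sym.
have pairs : \sum_(x in T) \sum_(x' in T) (f x != f x')%:R = m ^+ 2 - \sum_a N a ^+ 2.
  have -> : m ^+ 2 = \sum_(x in T) \sum_(x' in T) 1.
    by rewrite !sumr_const expr2 mulr_natr.
  rewrite sum_N2 -sumrB; apply: eq_bigr => x _.
  by rewrite -sumrB; apply: eq_bigr => x' _; exact: natr_neq.
(* Cauchy-Schwarz over the q - 1 symbols other than b bounds the collisions
   from below in terms of the mass m - N b away from b. *)
have cs := sqr_sum_le_card_sum_sqr (predC1 b) N.
rewrite cardC1 card_ord -subn1 (natrB _ (ltnW q_gt1)) in cs.
move: sum_N; rewrite (bigD1 b) //= => sum_N.
rewrite pairs far_b (bigD1 b) //=.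
have q_gt1' : (1 : R) < q%:R by rewrite ltr1n.
nra.
Qed.

End Disagreements.

Definition hamming {q n : nat} (x y : word q n) : nat := #|[set i | x i != y i]|.

Section Hamming.
Context {q n : nat}.
Implicit Types x y : word q n.

Lemma hammingC x y : hamming x y = hamming y x.
Proof. by apply: eq_card => i; rewrite !inE eq_sym. Qed.

Lemma hamming_xx x : hamming x x = 0%N.
Proof. by apply: eq_card0 => i; rewrite inE eqxx. Qed.

Lemma natr_hamming {R : pzSemiRingType} x y :
  (hamming x y)%:R = \sum_(i < n) (x i != y i)%:R :> R.
Proof.
rewrite /hamming -sum1_card natr_sum big_mkcond /=.
by apply: eq_bigr => i _; rewrite inE; case: (x i != y i).
Qed.

Lemma delta_hamming (R : realType) x y : delta R x y = (hamming x y)%:R / n%:R.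
Proof. by []. Qed.

Lemma delta_sym (R : realType) x y : delta R x y = delta R y x.
Proof. by rewrite !delta_hamming hammingC. Qed.

Lemma delta_xx (R : realType) x : delta R x x = 0.
Proof. by rewrite delta_hamming hamming_xx mul0r. Qed.

Lemma johnson_sum_le {R : realFieldType} (T : {set word q n}) y : (1 < q)%N ->
  (q%:R - 1 : R) * n%:R * \sum_(x in T) \sum_(x' in T) (hamming x x')%:R <=
  2 * (q%:R - 1) * n%:R * #|T|%:R * \sum_(x in T) (hamming x y)%:R
    - q%:R * (\sum_(x in T) (hamming x y)%:R) ^+ 2.
Proof.
move=> q_gt1.
pose e i := \sum_(x in T) (x i != y i)%:R : R.
pose D i := \sum_(x in T) \sum_(x' in T) (x i != x' i)%:R : R.
have -> : \sum_(x in T) (hamming x y)%:R = \sum_(i < n) e i.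
  by under eq_bigr do rewrite natr_hamming; rewrite exchange_big.
have -> : \sum_(x in T) \sum_(x' in T) (hamming x x')%:R = \sum_(i < n) D i.
  under eq_bigr do under eq_bigr do rewrite natr_hamming.
  under eq_bigr do rewrite exchange_big /=.
  by rewrite exchange_big.
have coords : (q%:R - 1) * \sum_(i < n) D i <=
    2 * (q%:R - 1) * #|T|%:R * \sum_(i < n) e i - q%:R * \sum_(i < n) e i ^+ 2.
  rewrite !mulr_sumr -sumrB; apply: ler_sum => i _.
  exact: (disagreeing_pairs_le q_gt1 T (fun x => x i) (y i)).
have cs := sqr_sum_le_card_sum_sqr 'I_n e; rewrite card_ord in cs.
have q_gt1' : (1 : R) < q%:R by rewrite ltr1n.
have n_ge0 : (0 : R) <= n%:R by [].
nra.
Qed.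

End Hamming.

Section JohnsonBound.
Context {R : realType} {q n : nat}.
Hypothesis q_gt1 : (1 < q)%N.

Let Q := q%:R : R.
Let Q_gt1 : 1 < Q. Proof. by rewrite ltr1n. Qed.

Lemma mulr_Jq_le x : Q * Jq R q x <= Q - 1.
Proof.
have sqrt_ge0 := sqrtr_ge0 (1 - Q * x / (Q - 1)).
rewrite /Jq -/Q mulrA mulrCA divff ?mulr1; last by rewrite gt_eqF // (lt_trans ltr01).
have := Q_gt1; nra.
Qed.

Lemma Jq_quadratic x : x <= 1 - Q^-1 ->
  2 * (Q - 1) * Jq R q x - Q * Jq R q x ^+ 2 = (Q - 1) * x.
Proof.
move=> x_le.
have Q_neq0 : Q != 0 by rewrite gt_eqF // (lt_trans ltr01).
have Q1_neq0 : Q - 1 != 0 by rewrite subr_eq0 gt_eqF.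
have t_ge0 : 0 <= 1 - Q * x / (Q - 1).
  rewrite subr_ge0 ler_pdivrMr ?subr_gt0 // mul1r.
  have := ler_wpM2l (ltW (lt_trans ltr01 Q_gt1)) x_le.
  by rewrite mulrBr mulr1 mulfV.
rewrite /Jq -/Q; set s := Num.sqrt _.
have s2 : s ^+ 2 = 1 - Q * x / (Q - 1) by exact: sqr_sqrtr.
have -> : 2 * (Q - 1) * ((Q - 1) / Q * (1 - s)) - Q * ((Q - 1) / Q * (1 - s)) ^+ 2
        = (Q - 1) ^+ 2 / Q * (1 - s ^+ 2) by field.
by rewrite s2; field; apply/andP.
Qed.

Lemma johnson_quadratic_lt r rho : r < rho -> Q * rho <= Q - 1 ->
  2 * (Q - 1) * r - Q * r ^+ 2 < 2 * (Q - 1) * rho - Q * rho ^+ 2.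
Proof.
move=> r_lt rho_le.
have Qr_lt : Q * r < Q * rho by rewrite ltr_pM2l // (lt_trans ltr01).
have : 0 < (rho - r) * (2 * (Q - 1) - Q * (rho + r)) by apply: mulr_gt0; lra.
lra.
Qed.

Definition mean_delta (S : {set word q n}) (y : word q n) : R :=
  (\sum_(x in S) delta R x y) / #|S|%:R.

Lemma separated_mean_delta_ge {eta : R} {S : {set word q n}} (y : word q n) :
  (0 < n)%N -> (0 < #|S|)%N ->
  {in S &, forall x x', x != x' -> eta <= delta R x x'} ->
  (Q - 1) * (eta - eta / #|S|%:R) <=
    2 * (Q - 1) * mean_delta S y - Q * mean_delta S y ^+ 2.
Proof.
move=> n_gt0 S_gt0 sepS; set r := mean_delta S y.
set m : R := #|S|%:R; set nr : R := n%:R.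
have mn_gt0 : 0 < m * nr by rewrite mulr_gt0 ?ltr0n.
pose E : R := \sum_(x in S) (hamming x y)%:R.
pose D : R := \sum_(x in S) \sum_(x' in S) (hamming x x')%:R.
have D_ge : m * (m - 1) * (eta * nr) <= D.
  apply: sum_offdiag_ge => [x _ | x x' xS x'S neq_xx']; first exact: ler0n.
  by rewrite -ler_pdivlMr ?ltr0n // -delta_hamming sepS.
have johnson : (Q - 1) * nr * D <= 2 * (Q - 1) * nr * m * E - Q * E ^+ 2 :=
  johnson_sum_le S y q_gt1.
have E_eq : E = r * (m * nr).
  rewrite /r /mean_delta; under eq_bigr do rewrite delta_hamming.
  rewrite -mulr_suml /E; field.
  by rewrite !pnatr_eq0 -!lt0n n_gt0 S_gt0.
rewrite -(ler_pM2l (exprn_gt0 2 mn_gt0)).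
have -> : (m * nr) ^+ 2 * ((Q - 1) * (eta - eta / m)) =
    (Q - 1) * nr * (m * (m - 1) * (eta * nr)) by field; rewrite gt_eqF ?ltr0n.
have -> : (m * nr) ^+ 2 * (2 * (Q - 1) * r - Q * r ^+ 2) =
    2 * (Q - 1) * nr * m * E - Q * E ^+ 2 by rewrite E_eq; ring.
apply: le_trans johnson; apply: ler_wpM2l D_ge.
by rewrite mulr_ge0 ?ler0n // subr_ge0 ler1n ltnW.
Qed.

Lemma card_separated_Jq_ball_lt (L : nat) (eta : R) (S : {set word q n})
    (y : word q n) :
  (1 < L)%N -> 0 < eta -> eta <= 1 - Q^-1 ->
  {in S &, forall x x', x != x' -> eta <= delta R x x'} ->
  {in S, forall x, delta R x y < Jq R q (eta - eta / L%:R)} ->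
  (#|S| < L)%N.
Proof.
move=> L_gt1 eta_gt0 eta_le sepS ballS.
rewrite ltnNge; apply/negP => L_le_S.
have [x0 [x1 [x0S x1S x01]]] : exists x0 x1, [/\ x0 \in S, x1 \in S & x0 != x1].
  by apply/card_gt1P; apply: leq_trans L_le_S.
have n_gt0 : (0 < n)%N.
  rewrite lt0n; apply: contraTneq (sepS _ _ x0S x1S x01) => n0.
  by rewrite delta_hamming (_ : n%:R = 0) ?n0 // invr0 mulr0 -ltNge.
have S_gt0 : (0 < #|S|)%N by rewrite (leq_trans _ L_le_S) // ltnW.
set rho := Jq R q _ in ballS; set m : R := #|S|%:R.
have mean_lt : mean_delta S y < rho.
  rewrite /mean_delta ltr_pdivrMr ?ltr0n // mulr_natr -sumr_const.
  by apply: ltr_sum => //; apply/hasP; exists x0; rewrite ?mem_index_enum.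
have eta_div_le : eta / m <= eta / L%:R.
  by rewrite ler_wpM2l ?(ltW eta_gt0) // lef_pV2 ?posrE ?ler_nat ?ltr0n // ltnW.
have etaL_le : eta - eta / L%:R <= 1 - Q^-1.
  by rewrite (le_trans _ eta_le) // gerBl divr_ge0 ?ler0n ?ltW.
have := separated_mean_delta_ge y n_gt0 S_gt0 sepS.
have := johnson_quadratic_lt _ _ mean_lt (mulr_Jq_le _).
rewrite -/rho -/m (Jq_quadratic _ etaL_le).
have := Q_gt1; nra.
Qed.

End JohnsonBound.

Theorem lemma2p5 (R : realType) (q n : nat) (eta : R) (C : {set word q n})
    (A L : nat) :
  (2 <= q)%N ->
  0 < eta -> eta <= 1 - q%:R^-1 ->
  (forall c, c \in C -> (#|[set c' in C | (delta R c c' < eta)%R]| <= A)%N) ->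
  (2 <= L)%N ->
  list_decodable R C (Jq R q (eta - eta / L%:R)) (A * L - 1).
Proof.
move=> q_gt1 eta_gt0 eta_le ballC L_gt1 y.
pose near : rel (word q n) := fun x x' => delta R x x' < eta.
have near_refl : reflexive near by move=> x; rewrite /near delta_xx.
have near_sym : symmetric near by move=> x x'; rewrite /near delta_sym.
set ball := [set c in C | delta R c y < _].
have [S [S_sub sepS coverS]] := exists_separated_cover near ball near_refl near_sym.
have ball_le : (#|ball| <= #|S| * A)%N.
  apply: (card_le_cover near) coverS _ => s /(subsetP S_sub); rewrite inE => /andP[sC _].
  apply: leq_trans (ballC s sC); apply: subset_leq_card; apply/subsetP => x.
  by rewrite !inE => /andP[/andP[-> _]].
have S_lt : (#|S| < L)%N.
  apply: (card_separated_Jq_ball_lt q_gt1 _ _ _ y) L_gt1 eta_gt0 eta_le _ _.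
  - by move=> x x' xS x'S neq_xx'; rewrite leNgt; exact: sepS.
  - by move=> x /(subsetP S_sub); rewrite inE => /andP[].
apply: leq_trans ball_le _; nia.
Qed.
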